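(* Let $S_1,S_2$ be two non-empty intervals of extended $\mathbb Z$-segments with $\mathrm{Supp}(S_1)=\mathrm{Supp}(S_2)$. Then: (a) $S_1\cap S_2$ is an interval; (b) there are at most $3$ intervals that are adjacent to $S_1$; (c) if $|S_1|>1$, $|S_2|>1$, $|S_1\cap S_2|=1$, and there exists an interval $S_1'$ adjacent to $S_1$ with $|S_1'\cap S_2|>0$, then $|S_1'\cap S_2|=2$.
   Context: A $\mathbb Z$-segment is $[A,B]=\{A,A-1,\dots,B\}$ with $A\ge B$ integers; its length is $b=A-B+1$. A virtual extended $\mathbb Z$-segment is a triple $([A,B],l,\eta)$ with $l\in\mathbb Z$, $l\le b/2$, and $\eta\in\{\pm1\}$, where if $b=2l$ the values $\eta$ and $-\eta$ are identified (otherwise not). It is an extended $\mathbb Z$-segment if moreover $l\ge0$. Its support is $\mathrm{Supp}=[A,B]$. Two virtual extended $\mathbb Z$-segments $([A_i,B_i],l_i,\eta_i)$ are adjacent if they have the same support and either there are lifts with $\eta_1=\eta_2$ and $|l_1-l_2|=1$, or $b$ is odd, $l_1=l_2=(b-1)/2$ and $\eta_1=-\eta_2$. A virtual interval is a finite set $\{\mathfrak e_1,\dots,\mathfrak e_r\}$ ($r\ge0$) of pairwise distinct virtual extended $\mathbb Z$-segments with $\mathfrak e_i$ adjacent to $\mathfrak e_{i+1}$ for all $i$; its support is the common support; an interval is a virtual interval consisting of extended $\mathbb Z$-segments. Two non-empty virtual intervals $S_1,S_2$ are adjacent if $S_1\cup S_2$ is a virtual interval and $|S_1|+1=|S_1\cup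 S_2|=|S_2|+1$. Two intervals $S_1,S_2$ are adjacent if there exist virtual intervals $S_1^+,S_2^+$ that are adjacent and satisfy $S_i=S_i^+\cap\{\text{extended }\mathbb Z\text{-segments}\}$. *)

From HB Require Import structures.
From mathcomp Require Import all_boot all_order all_algebra.
From mathcomp Require Import finmap.
Set Implicit Arguments. Unset Strict Implicit. Unset Printing Implicit Defensive.
Import Order.TTheory GRing.Theory Num.Theory.
Local Open Scope ring_scope.
Local Open Scope fset_scope.

(* Raw data ([A,B], l, eta) : (A, B, l, eta), with eta = true for +1 and
   eta = false for -1. *)
Definition raw_vseg := (int * int * int * bool)%type.

Definition rA (x : raw_vseg) : int := x.1.1.1.
Definition rB (x : raw_vseg) : int := x.1.1.2.
Definition rl (x : raw_vseg) : int := x.1.2.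
Definition reta (x : raw_vseg) : bool := x.2.
Definition rlen (x : raw_vseg) : int := rA x - rB x + 1.

(* Well-formedness: A >= B, l <= b/2, and when b = 2l the identification
   eta ~ -eta is implemented by choosing the canonical representative
   eta = +1 (true). *)
Definition wf_vseg (x : raw_vseg) : bool :=
  [&& rB x <= rA x, 2 * rl x <= rlen x & ((2 * rl x == rlen x) ==> reta x)].

Definition vseg := {x : raw_vseg | wf_vseg x}.

Definition vA (e : vseg) := rA (val e).
Definition vB (e : vseg) := rB (val e).
Definition vl (e : vseg) := rl (val e).
Definition veta (e : vseg) := reta (val e).
Definition vlen (e : vseg) := rlen (val e).
Definition supp (e : vseg) : int * int := (vA e, vB e).

Definition is_ext (e : vseg) : bool := 0 <= vl e.

(* Adjacency of virtual extended Z-segments.  "There are lifts with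
   eta1 = eta2": a class with b = 2l contains both signs, so lifts with
   equal signs exist iff b = 2 l1 or b = 2 l2 or the canonical signs agree. *)
Definition vadj (e1 e2 : vseg) : bool :=
  (supp e1 == supp e2) &&
  ( (((2 * vl e1 == vlen e1) || (2 * vl e2 == vlen e2) || (veta e1 == veta e2))
      && (`|vl e1 - vl e2| == 1))
    || [&& ~~ (2 %| `|vlen e1|)%N, 2 * vl e1 == vlen e1 - 1,
           vl e1 == vl e2 & veta e1 != veta e2] ).

Definition is_vinterval (S : {fset vseg}) : Prop :=
  exists s : seq vseg, [/\ uniq s, S =i s & sorted vadj s].

Definition is_interval (S : {fset vseg}) : Prop :=
  is_vinterval S /\ (forall e, e \in S -> is_ext e).

Definition ext_part (S : {fset vseg}) : {fset vseg} :=
  [fset e in S | is_ext e].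

Definition adj_vinterval (S1 S2 : {fset vseg}) : Prop :=
  [/\ is_vinterval S1, is_vinterval S2, S1 != fset0, S2 != fset0 &
      [/\ is_vinterval (S1 `|` S2),
      (#|` S1| + 1 = #|` S1 `|` S2|)%N & (#|` S1 `|` S2| = #|` S2| + 1)%N]].

Definition adj_interval (S1 S2 : {fset vseg}) : Prop :=
  [/\ is_interval S1, is_interval S2 &
      exists S1p S2p, [/\ adj_vinterval S1p S2p,
                          S1 = ext_part S1p & S2 = ext_part S2p]].

(* Supp(S1) = Supp(S2) (for non-empty S1, S2: all members share the support) *)
Definition same_support (S1 S2 : {fset vseg}) : Prop :=
  forall e1 e2, e1 \in S1 -> e2 \in S2 -> supp e1 = supp e2.

From mathcomp Require Import all_boot all_order all_algebra finmap zify.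
Import Order.TTheory.
Set Implicit Arguments. Unset Strict Implicit. Unset Printing Implicit Defensive.
Local Open Scope fset_scope.
Local Open Scope ring_scope.

(* A virtual extended segment of support [A,B] is determined by its position
   p = l if eta = +1 and p = b - l if eta = -1; this identifies the segments
   of a fixed support with Z, adjacency becoming |p - p'| = 1 and being
   extended becoming 0 <= p <= b.  Hence virtual intervals are integer
   intervals, intervals are integer intervals inside [0, b], and adjacent
   virtual intervals are translates of each other by +-1.  An interval
   adjacent to [a, c] is thus the part inside [0, b] of a +-1-translate of
   some integer interval whose part inside [0, b] is [a, c]; only three such
   sets exist, [a+1, min(c+1, b)], [max(a-1, 0), c-1] and
   [max(a-1, 0), min(c+1, b)], and all three claims become integer
   arithmetic. *)

Definition seg_len (s : int * int) : int := s.1 - s.2 + 1.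
Definition is_supp (s : int * int) : bool := s.2 <= s.1.

Definition vpos (e : vseg) : int := if veta e then vl e else vlen e - vl e.

Definition raw_of_pos (s : int * int) (p : int) : raw_vseg :=
  if 2 * p <= seg_len s then (s.1, s.2, p, true)
  else (s.1, s.2, seg_len s - p, false).

Lemma wf_vseg0 : wf_vseg (0, 0, 0, true). Proof. by []. Qed.

Definition vseg0 : vseg := exist (fun x => is_true (wf_vseg x)) _ wf_vseg0.

Definition vseg_of_pos (s : int * int) (p : int) : vseg :=
  insubd vseg0 (raw_of_pos s p).

Section Positions.

Variable s : int * int.
Hypothesis supp_s : is_supp s.

Lemma wf_raw_of_pos p : wf_vseg (raw_of_pos s p).
Proof.
case: s supp_s => A B; rewrite /is_supp /raw_of_pos /seg_len /= => BA.
by case: ifP => ?; rewrite /wf_vseg /rlen /rA /rB /rl /reta /=; lia.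
Qed.

Lemma val_vseg_of_pos p : val (vseg_of_pos s p) = raw_of_pos s p.
Proof. by rewrite val_insubd wf_raw_of_pos. Qed.

Lemma supp_vseg_of_pos p : supp (vseg_of_pos s p) = s.
Proof.
by rewrite /supp /vA /vB val_vseg_of_pos /raw_of_pos; case: ifP; case: s.
Qed.

Lemma vpos_vseg_of_pos p : vpos (vseg_of_pos s p) = p.
Proof.
rewrite /vpos /veta /vl /vlen val_vseg_of_pos /raw_of_pos.
by case: leP => ? /=; rewrite /seg_len /rlen /rA /rB /rl /=; lia.
Qed.

End Positions.

Lemma is_supp_supp e : is_supp (supp e).
Proof. by case: e => x wf_x; case/and3P: (wf_x). Qed.

Lemma vposK e : vseg_of_pos (supp e) (vpos e) = e.
Proof.
apply: val_inj; rewrite val_vseg_of_pos ?is_supp_supp //.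
case: e => [[[[A B] l] [|]] wf_e]; case/and3P: (wf_e);
  rewrite /vpos /raw_of_pos /supp /seg_len /vA /vB /veta /vl /vlen
          /rlen /rA /rB /rl /reta /= => BA lb eq_eta;
  by case: ifP => ?; first [congr (_, _, _, _); lia | exfalso; lia].
Qed.

Lemma vpos_inj e1 e2 : supp e1 = supp e2 -> vpos e1 = vpos e2 -> e1 = e2.
Proof. by move=> eq_supp eq_pos; rewrite -(vposK e1) -(vposK e2) eq_supp eq_pos. Qed.

Lemma vadjE e1 e2 :
  vadj e1 e2 = (supp e1 == supp e2) && (`|vpos e1 - vpos e2| == 1).
Proof.
rewrite /vadj; case: (supp e1 =P supp e2) => //=.
case: e1 => [[[[A B] l] eta] wf1]; case/and3P: (wf1).
case: e2 => [[[[A' B'] l'] eta'] wf2]; case/and3P: (wf2).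
rewrite /vpos /supp /vA /vB /veta /vl /vlen /rlen /rA /rB /rl /reta /=.
move=> BA' lb' eq_eta' BA lb eq_eta [? ?]; subst A' B'; clear wf1 wf2.
by case: eta eq_eta; case: eta' eq_eta' => /= ? ?; lia.
Qed.

Lemma is_extE e : is_ext e = (0 <= vpos e <= seg_len (supp e)).
Proof.
case: e => [[[[A B] l] eta] wf_e]; case/and3P: (wf_e).
rewrite /is_ext /seg_len /vpos /supp /vA /vB /veta /vl /vlen /rlen /rA /rB /rl /reta /=.
by clear wf_e; case: eta => /=; lia.
Qed.

Definition vblock_seq (s : int * int) (lo hi : int) : seq vseg :=
  [seq vseg_of_pos s (lo + i%:Z)
  | i <- iota 0 (if lo <= hi then absz (hi - lo + 1) else 0%N)].

Definition vblock (s : int * int) (lo hi : int) : {fset vseg} :=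
  [fset e in vblock_seq s lo hi].

Section Blocks.

Variable s : int * int.
Hypothesis supp_s : is_supp s.

Lemma mem_vblock_seq lo hi e :
  (e \in vblock_seq s lo hi) = (supp e == s) && (lo <= vpos e <= hi).
Proof.
apply/mapP/andP => [[i] | [/eqP <- e_lohi]].
  rewrite mem_iota => i_lt ->; rewrite supp_vseg_of_pos // vpos_vseg_of_pos //.
  by split=> //; move: i_lt; case: ifP; lia.
exists (absz (vpos e - lo)); first by rewrite mem_iota; case: ifP; lia.
by rewrite -{1}(vposK e); congr vseg_of_pos; lia.
Qed.

Lemma uniq_vblock_seq lo hi : uniq (vblock_seq s lo hi).
Proof.
rewrite map_inj_in_uniq ?iota_uniq // => i j _ _ /(congr1 vpos).
by rewrite !vpos_vseg_of_pos //; lia.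
Qed.

Lemma sorted_vadj_vblock_seq lo hi : sorted vadj (vblock_seq s lo hi).
Proof.
rewrite sorted_map; case: (if _ then _ else _) => //= n.
elim: n 0%N => //= n IHn i; rewrite IHn andbT /=.
by rewrite vadjE !supp_vseg_of_pos // !vpos_vseg_of_pos // eqxx /=; lia.
Qed.

Lemma in_vblock lo hi e :
  (e \in vblock s lo hi) = (supp e == s) && (lo <= vpos e <= hi).
Proof. by rewrite in_fset mem_vblock_seq. Qed.

Lemma vseg_of_pos_in_vblock (lo hi p : int) :
  (vseg_of_pos s p \in vblock s lo hi) = (lo <= p <= hi).
Proof. by rewrite in_vblock supp_vseg_of_pos // vpos_vseg_of_pos // eqxx. Qed.

Lemma card_vblock lo hi :
  #|` vblock s lo hi| = if lo <= hi then absz (hi - lo + 1) else 0%N.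
Proof.
by rewrite card_fseq undup_id ?uniq_vblock_seq // size_map size_iota.
Qed.

Lemma vblock_neq0 (lo hi : int) : (vblock s lo hi != fset0) = (lo <= hi).
Proof. by rewrite -cardfs_gt0 card_vblock; case: ifP; lia. Qed.

Lemma vblock_vinterval lo hi : is_vinterval (vblock s lo hi).
Proof.
exists (vblock_seq s lo hi); split; first exact: uniq_vblock_seq.
  by move=> e; rewrite in_fset.
exact: sorted_vadj_vblock_seq.
Qed.

Lemma eq_vblock (l1 h1 l2 h2 : int) :
  (forall p, (l1 <= p <= h1) = (l2 <= p <= h2)) ->
  vblock s l1 h1 = vblock s l2 h2.
Proof. by move=> eq_range; apply/fsetP => e; rewrite !in_vblock eq_range. Qed.

Lemma vblockI l1 h1 l2 h2 :
  vblock s l1 h1 `&` vblock s l2 h2 =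
  vblock s (Num.max l1 l2) (Num.min h1 h2).
Proof.
apply/fsetP => e; rewrite in_fsetI !in_vblock.
by case: (supp e == s) => //=; lia.
Qed.

Lemma ext_part_vblock lo hi :
  ext_part (vblock s lo hi) = vblock s (Num.max lo 0) (Num.min hi (seg_len s)).
Proof.
apply/fsetP => e; rewrite /ext_part !inE /= !mem_vblock_seq is_extE.
by case: (supp e =P s) => [-> | ] //=; lia.
Qed.

Lemma vblock_interval (a c : int) :
  0 <= a -> c <= seg_len s -> is_interval (vblock s a c).
Proof.
move=> a_ge0 c_le; split=> [|e]; first exact: vblock_vinterval.
by rewrite in_vblock is_extE => /andP[/eqP ->]; lia.
Qed.

End Blocks.

Lemma vblock_inj s1 s2 (l1 h1 l2 h2 : int) :
  is_supp s1 -> is_supp s2 -> l1 <= h1 ->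
  vblock s1 l1 h1 = vblock s2 l2 h2 -> [/\ s1 = s2, l1 = l2 & h1 = h2].
Proof.
move=> supp_s1 supp_s2 l1_h1 eq_blocks.
have := vseg_of_pos_in_vblock supp_s1 l1 h1 l1.
rewrite {1}eq_blocks in_vblock // supp_vseg_of_pos // lexx l1_h1.
case/andP=> /eqP eq_s _; subst s2.
have mem p : (l1 <= p <= h1) = (l2 <= p <= h2).
  by rewrite -(vseg_of_pos_in_vblock supp_s1) eq_blocks vseg_of_pos_in_vblock.
have := mem l1; have := mem h1; have := mem l2; have := mem h2.
by rewrite !lexx l1_h1; split=> //; lia.
Qed.

Lemma vadj_path_vblock x t : path vadj x t -> uniq (x :: t) ->
  exists lo hi, (vpos x == lo) || (vpos x == hi) /\
    forall e, (e \in x :: t) = (supp e == supp x) && (lo <= vpos e <= hi).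
Proof.
elim: t x => [|y t IHt] x /=.
  move=> _ _; exists (vpos x), (vpos x); split; first by rewrite eqxx.
  move=> e; rewrite inE; apply/eqP/andP => [-> | [/eqP supp_e pos_e]].
    by rewrite eqxx lexx.
  by apply: vpos_inj => //; lia.
case/andP=> + path_y /andP[x_notin uniq_y].
rewrite vadjE => /andP[/eqP supp_xy pos_xy].
have [lo [hi [end_y mem_y]]] := IHt y path_y uniq_y.
have := mem_y x; rewrite (negbTE x_notin) supp_xy eqxx /= => x_out.
have := mem_y y; rewrite mem_head eqxx /= => y_in.
exists (Num.min lo (vpos x)), (Num.max hi (vpos x)); split; first lia.
move=> e; rewrite in_cons mem_y.
case: (e =P x) => [-> | e_neq_x] /=; first by rewrite supp_xy eqxx /=; lia.
case: (supp e =P supp y) => //= supp_e.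
have : vpos e != vpos x.
  by apply: contra_not_neq e_neq_x; apply: vpos_inj; rewrite supp_e.
lia.
Qed.

Lemma vinterval_vblock S : is_vinterval S -> S != fset0 ->
  exists s lo hi, [/\ is_supp s, lo <= hi & S = vblock s lo hi].
Proof.
case=> [[|x t] [uniq_xt S_xt path_xt]] S_neq0.
  by case/fset0Pn: S_neq0 => e; rewrite S_xt.
have [lo [hi [_ mem_xt]]] := vadj_path_vblock path_xt uniq_xt.
exists (supp x), lo, hi; split; first exact: is_supp_supp.
  by have := mem_xt x; rewrite mem_head eqxx /=; lia.
by apply/fsetP => e; rewrite in_vblock ?is_supp_supp // S_xt mem_xt.
Qed.

Lemma is_interval0 : is_interval fset0.
Proof. by split=> [|e]; [exists [::] | rewrite inE]. Qed.

Lemma interval_vblock S : is_interval S ->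
  exists s a c, [/\ is_supp s, 0 <= a, c <= seg_len s & S = vblock s a c].
Proof.
case: (eqVneq S fset0) => [-> _ | S_neq0 [S_vint S_ext]].
  exists (0, 0), 1, 0; split=> //.
  by apply/fsetP => e; rewrite inE in_vblock //; lia.
have [s [a [c [supp_s a_le_c S_ac]]]] := vinterval_vblock S_vint S_neq0.
have ext_in p : a <= p <= c -> 0 <= p <= seg_len s.
  move=> p_in; have := S_ext (vseg_of_pos s p).
  rewrite S_ac vseg_of_pos_in_vblock // p_in is_extE.
  by rewrite supp_vseg_of_pos // vpos_vseg_of_pos //; apply.
exists s, a, c; split=> //.
- by have := ext_in a; rewrite lexx a_le_c; case/(_ isT)/andP.
- by have := ext_in c; rewrite lexx a_le_c; case/(_ isT)/andP.
Qed.

Lemma interval_neq0_vblock S : is_interval S -> S != fset0 ->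
  exists s a c, [/\ is_supp s, 0 <= a, a <= c, c <= seg_len s & S = vblock s a c].
Proof.
move=> /interval_vblock[s [a [c [supp_s a_ge0 c_le S_ac]]]] S_neq0.
exists s, a, c; split=> //.
by rewrite -(vblock_neq0 supp_s) -S_ac.
Qed.

Lemma adj_vinterval_shift P Q : adj_vinterval P Q ->
  exists s lo hi d, [/\ is_supp s, lo <= hi, d = 1 \/ d = -1,
    P = vblock s lo hi & Q = vblock s (lo + d) (hi + d)].
Proof.
case=> P_vint Q_vint P_neq0 Q_neq0 [PQ_vint card_P card_Q].
have [s1 [l1 [h1 [supp_s1 l1_h1 P_blk]]]] := vinterval_vblock P_vint P_neq0.
have [s2 [l2 [h2 [supp_s2 l2_h2 Q_blk]]]] := vinterval_vblock Q_vint Q_neq0.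
have PQ_neq0 : P `|` Q != fset0 by rewrite fsetU_eq0 negb_and P_neq0.
have [s [l [h [supp_s l_h PQ_blk]]]] := vinterval_vblock PQ_vint PQ_neq0.
have supp_in s' p : is_supp s' -> vseg_of_pos s' p \in P `|` Q -> s' = s.
  by move=> supp_s'; rewrite PQ_blk in_vblock // supp_vseg_of_pos // => /andP[/eqP].
have eq_s1 : s1 = s.
  apply: (supp_in _ l1 supp_s1).
  by rewrite in_fsetU P_blk vseg_of_pos_in_vblock // lexx l1_h1.
have eq_s2 : s2 = s.
  apply: (supp_in _ l2 supp_s2).
  by rewrite in_fsetU Q_blk vseg_of_pos_in_vblock // lexx l2_h2 orbT.
subst s1 s2.
have mem p : (l <= p <= h) = (l1 <= p <= h1) || (l2 <= p <= h2).
  by rewrite -!(vseg_of_pos_in_vblock supp_s) -PQ_blk in_fsetU P_blk Q_blk.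
rewrite PQ_blk P_blk Q_blk !card_vblock // l1_h1 l_h l2_h2 in card_P card_Q.
have := mem l; have := mem h; have := mem l1; have := mem h1.
have := mem l2; have := mem h2; rewrite !lexx l_h l1_h1 l2_h2 /= => *.
rewrite P_blk Q_blk.
have [[-> ->] | [-> ->]] :
    (l2 = l1 + 1 /\ h2 = h1 + 1) \/ (l2 = l1 - 1 /\ h2 = h1 - 1) by lia.
- by exists s, l1, h1, 1; split=> //; left.
- by exists s, l1, h1, (-1); split=> //; right.
Qed.

Section AdjacentIntervals.

Variables (s : int * int) (a c : int).
Hypotheses (supp_s : is_supp s) (a_le_c : a <= c).
Let b := seg_len s.

Lemma adj_interval_cases S : adj_interval (vblock s a c) S ->
  [\/ S = vblock s (a + 1) (Num.min (c + 1) b),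
      S = vblock s (Num.max (a - 1) 0) (c - 1)
    | S = vblock s (Num.max (a - 1) 0) (Num.min (c + 1) b)].
Proof.
case=> _ _ [P [Q [PQ_adj P_ext S_ext]]].
have [s' [lo [hi [d [supp_s' lo_hi d_pm1 P_blk Q_blk]]]]] :=
  adj_vinterval_shift PQ_adj.
rewrite P_blk ext_part_vblock // in P_ext.
have [eq_s' eq_a eq_c] := vblock_inj supp_s supp_s' a_le_c P_ext.
subst s'; rewrite S_ext Q_blk ext_part_vblock //.
(* Shifting up keeps the upper end [min (c+1) b] and moves the lower end to
   [a+1] unless [lo < a = 0]; shifting down is symmetric. *)
case: d_pm1 => ->; [case: (eqVneq lo a) | case: (eqVneq hi c)] => ?;
  [apply: Or31 | apply: Or33 | apply: Or32 | apply: Or33];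
  by apply: (eq_vblock supp_s) => p; rewrite /b; lia.
Qed.

Lemma card_adj_interval_vblockI S (d f : int) :
  0 <= d -> f <= b -> a < c -> d < f ->
  #|` vblock s a c `&` vblock s d f| = 1%N ->
  adj_interval (vblock s a c) S ->
  (0 < #|` S `&` vblock s d f|)%N -> #|` S `&` vblock s d f| = 2%N.
Proof.
move=> d_ge0 f_le a_lt_c d_lt_f + /adj_interval_cases.
by rewrite vblockI // card_vblock // => card_I [] ->;
  rewrite vblockI // card_vblock //; move: card_I f_le; rewrite /b;
  repeat case: ifP => ?; lia.
Qed.

End AdjacentIntervals.

Lemma is_interval_fsetI S1 S2 :
  is_interval S1 -> is_interval S2 -> is_interval (S1 `&` S2).
Proof.
move=> /interval_vblock[s1 [a [c [supp_s1 a_ge0 c_le S1_ac]]]].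
move=> /interval_vblock[s2 [d [f [supp_s2 d_ge0 f_le S2_df]]]].
rewrite S1_ac S2_df; case: (eqVneq s1 s2) => [<- | neq_s].
  by rewrite vblockI //; apply: vblock_interval => //; lia.
suff -> : vblock s1 a c `&` vblock s2 d f = fset0 by exact: is_interval0.
apply/fsetP => e; rewrite in_fsetI !in_vblock // inE.
by apply/negP => /and4P[/and3P[/eqP -> _ _] /eqP eq_s _ _]; rewrite eq_s eqxx in neq_s.
Qed.

Lemma card_adj_interval S1 (F : {fset {fset vseg}}) :
  is_interval S1 -> S1 != fset0 ->
  (forall S, S \in F -> adj_interval S1 S) -> (#|` F| <= 3)%N.
Proof.
move=> S1_int S1_neq0 F_adj.
have [s [a [c [supp_s _ a_le_c _ S1_ac]]]] := interval_neq0_vblock S1_int S1_neq0.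
set b := seg_len s.
have /uniq_leq_size : {subset F <= [:: vblock s (a + 1) (Num.min (c + 1) b);
                                     vblock s (Num.max (a - 1) 0) (c - 1);
                                     vblock s (Num.max (a - 1) 0) (Num.min (c + 1) b)]}.
  move=> S /F_adj; rewrite S1_ac => /(adj_interval_cases supp_s a_le_c).
  by case=> ->; rewrite !inE eqxx ?orbT.
by apply; exact: fset_uniq.
Qed.

Lemma card_adj_interval_fsetI S1 S2 S1' :
  is_interval S1 -> is_interval S2 -> same_support S1 S2 ->
  (1 < #|` S1|)%N -> (1 < #|` S2|)%N -> #|` S1 `&` S2| = 1%N ->
  adj_interval S1 S1' -> (0 < #|` S1' `&` S2|)%N -> #|` S1' `&` S2| = 2%N.
Proof.
move=> /interval_vblock[s [a [c [supp_s _ _ S1_ac]]]].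
move=> /interval_vblock[s' [d [f [supp_s' d_ge0 f_le S2_df]]]] same_supp.
rewrite {1}S1_ac {1}S2_df !card_vblock //.
case: ifP => // a_le_c a_lt_c; case: ifP => // d_le_f d_lt_f.
have eq_s : s' = s.
  have := same_supp (vseg_of_pos s a) (vseg_of_pos s' d).
  rewrite S1_ac S2_df !vseg_of_pos_in_vblock // lexx a_le_c lexx d_le_f.
  by rewrite !supp_vseg_of_pos // => /(_ isT isT).
subst s'; rewrite S1_ac S2_df.
by apply: card_adj_interval_vblockI => //; lia.
Qed.

Theorem lemma4p5 (S1 S2 : {fset vseg}) :
  is_interval S1 -> is_interval S2 -> S1 != fset0 -> S2 != fset0 ->
  same_support S1 S2 ->
  [/\ is_interval (S1 `&` S2),
      (forall F : {fset {fset vseg}},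
         (forall S, S \in F -> adj_interval S1 S) -> (#|` F| <= 3)%N)
    & ((1 < #|` S1|)%N -> (1 < #|` S2|)%N -> #|` S1 `&` S2| = 1%N ->
       forall S1' : {fset vseg}, adj_interval S1 S1' ->
         (0 < #|` S1' `&` S2|)%N -> #|` S1' `&` S2| = 2%N)].
Proof.
move=> S1_int S2_int S1_neq0 _ same_supp; split.
- exact: is_interval_fsetI.
- by move=> F; apply: card_adj_interval.
- by move=> *; apply: (card_adj_interval_fsetI S1_int S2_int same_supp).
Qed.
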